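(* Let $k$ be an algebraically closed field, $n\ge1$, $1\le g\le n$, $h:=n+1-g$, and let $K$ and the representations $V_{(p,q)}$ be as in the context. Fix $m\in\mathbb N$. Let $Q_m^\infty$ be the quiver with vertices $(r,s)_\infty$ for $s\in\{0,\dots,h-1\}$ and $0\le r\le h(m+1)-s$, with arrows $\rho_\infty(r,s):(r,s)_\infty\to(r+1,s)_\infty$, and $\pi_\infty(r,s):(r+1,s-1)_\infty\to(r,s)_\infty$ for $1\le s\le h-1$, $\pi_\infty(r,0):(r+1,h-1)_\infty\to(r,0)_\infty$, whenever both endpoints lie in $Q_m^\infty$. Let $F_\infty:kQ_m^\infty\to\operatorname{rep}K$ be the $k$-linear functor defined in the context and $R_m^\infty$ the full subcategory of $\operatorname{rep}K$ with objects $F_\infty X$, $X$ a vertex of $Q_m^\infty$. For $s\in\{0,\dots,h-1\}$ let $s^+=s+1$ if $s<h-1$ and $s^+=0$ if $s=h-1$. Let $\overline{kQ_m^\infty}$ be the quotient of the path category $kQ_m^\infty$ by the ideal generated by (i) $\pi_\infty(r+1,s^+)\circ\rho_\infty(r+1,s)=\rho_\infty(r,s^+)\circ\pi_\infty(r,s^+)$ for all $r,s$ for which all arrows involved lie in $Q_m^\infty$, and (ii) $\pi_\infty(0,s^+)\circ\rho_\infty(0,s)=0$ for all $s\in\{0,\dots,h-1\}$. Then $F_\infty$ induces an isomorphism of $k$-categories $\overline{F_\infty}:\overline{kQ_m^\infty}\to R_m^\infty$.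
   Context: $K$: quiver with vertices $0,\dots,n$ and arrows $\beta_x:x\to x+1$ ($0\le x\le g-1$) and $\alpha_x:x+1\to x$ ($g\le x\le n$), indices modulo $n+1$; $\operatorname{rep}K$ is the category of finite-dimensional representations. For $0\le p\le n$, $q\ge p$: $V_{(p,q)}(x)$ is spanned by the basis vectors $e_i$, $p\le i\le q$, $i\equiv x\pmod{n+1}$; $V_{(p,q)}(\beta_x)(e_i)=e_{i+1}$ if $i<q$, $=0$ if $i=q$; $V_{(p,q)}(\alpha_x)(e_i)=e_{i-1}$ if $i>p$, $=0$ if $i=p$. Composition $\circ$ is written right to left. For integers $a$ and $b>0$, $\mathrm{DIV}(a,b)$ and $\mathrm{MOD}(a,b)$ are the unique integers with $a=\mathrm{DIV}(a,b)\,b+\mathrm{MOD}(a,b)$ and $0\le\mathrm{MOD}(a,b)<b$. Definition of $F_\infty$: put $p_0=0$, $p_s=g+s$ for $1\le s\le h-1$, and $q_{r,s}=g+\mathrm{MOD}(r+s,h)+(n+1)\mathrm{DIV}(r+s,h)$; set $F_\infty(r,s)_\infty=V_{(p_s,q_{r,s})}$. $F_\infty\rho_\infty(r,s):V_{(p_s,q_{r,s})}\to V_{(p_s,q_{r+1,s})}$ is $e_t\mapsto e_t$ for $p_s\le t\le q_{r,s}$. For $1\le s\le h-1$, $F_\infty\pi_\infty(r,s):V_{(p_{s-1},q_{r+1,s-1})}\to V_{(p_s,q_{r,s})}$ is $e_t\mapsto0$ for $p_{s-1}\le t<p_s$ and $e_t\mapsto e_t$ for $p_s\le t\le q_{r+1,s-1}$.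 For $s=0$, $F_\infty\pi_\infty(r,0):V_{(p_{h-1},q_{r+1,h-1})}\to V_{(0,q_{r,0})}$ is $e_t\mapsto 0$ for $p_{h-1}\le t\le n$ and $e_t\mapsto e_{t-(n+1)}$ for $n+1\le t\le q_{r+1,h-1}$. *)

From HB Require Import structures.
From mathcomp Require Import all_boot all_order all_algebra.
Set Implicit Arguments. Unset Strict Implicit. Unset Printing Implicit Defensive.
Import Order.TTheory GRing.Theory Num.Theory.

(* ---------- Coefficient-matrix encoding of representations of K ----------
   A representation V_(p,q) is encoded by the pair (p,q); its total space has
   basis e_i, p <= i <= q, with e_i lying in V(x) for i = x mod (n+1).
   A linear map V_(p,q) -> V_(p',q') (on total spaces) is encoded by
   c : nat -> nat -> k, where c i j is the coefficient of e_j in f(e_i). *)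

Definition bmat (k : nzRingType) (b : bool) : k := ((nat_of_bool b)%:R)%R.

(* composition  c2 o c1  through the middle interval [pb, qb] *)
Definition compc (k : nzRingType) (pb qb : nat) (c1 c2 : nat -> nat -> k) :=
  fun i l => (\sum_(pb <= j < qb.+1) c1 i j * c2 j l)%R.

(* V_(p,q)(beta_x) extended by zero to the total space *)
Definition betaM (k : nzRingType) (n p q x : nat) : nat -> nat -> k :=
  fun i j => bmat k [&& p <= i <= q, i %% n.+1 == x, i < q & j == i.+1].

(* V_(p,q)(alpha_x) : V(x+1) -> V(x), extended by zero *)
Definition alphaM (k : nzRingType) (n p q x : nat) : nat -> nat -> k :=
  fun i j => bmat k [&& p <= i <= q, i %% n.+1 == x.+1 %% n.+1, p < i & j == i.-1].

Definition isHom (k : nzRingType) (n g : nat) (V W : nat * nat)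
    (f : nat -> nat -> k) : Prop :=
  let: (p, q) := V in let: (p', q') := W in
  (forall i j, (f i j != 0)%R ->
      [&& p <= i <= q, p' <= j <= q' & i %% n.+1 == j %% n.+1]) /\
  (forall x, x < g -> forall i l,
      compc p q (betaM k n p q x) f i l = compc p' q' f (betaM k n p' q' x) i l) /\
  (forall x, g <= x <= n -> forall i l,
      compc p q (alphaM k n p q x) f i l = compc p' q' f (alphaM k n p' q' x) i l).

Definition hh (n g : nat) : nat := n.+1 - g.

Definition vertexQ (n g m : nat) (X : nat * nat) : bool :=
  (X.2 < hh n g) && (X.1 <= hh n g * m.+1 - X.2).

Definition arrowQ := (bool * (nat * nat))%type.
Definition Rho (r s : nat) : arrowQ := (true, (r, s)).
Definition Pi (r s : nat) : arrowQ := (false, (r, s)).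

Definition srcA (n g : nat) (a : arrowQ) : nat * nat :=
  let: (b, (r, s)) := a in
  if b then (r, s) else if s == 0 then (r.+1, (hh n g).-1) else (r.+1, s.-1).
Definition tgtA (n g : nat) (a : arrowQ) : nat * nat :=
  let: (b, (r, s)) := a in if b then (r.+1, s) else (r, s).

Definition validA (n g m : nat) (a : arrowQ) : bool :=
  vertexQ n g m (srcA n g a) && vertexQ n g m (tgtA n g a).

(* paths, listed in traversal order (first arrow first) *)
Fixpoint pathb (n g m : nat) (X Y : nat * nat) (p : seq arrowQ) : bool :=
  match p with
  | [::] => X == Y
  | a :: p' => [&& validA n g m a, srcA n g a == X & pathb n g m (tgtA n g a) Y p']
  end.
Definition isPath (n g m : nat) (X Y : nat * nat) (p : seq arrowQ) : bool :=
  vertexQ n g m X && pathb n g m X Y p.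

Definition pS (n g s : nat) : nat := if s == 0 then 0 else g + s.
(* q_{r,s} depends only on r+s *)
Definition qRS (n g t : nat) : nat :=
  g + t %% hh n g + n.+1 * (t %/ hh n g).
Definition Fobj (n g : nat) (X : nat * nat) : nat * nat :=
  (pS n g X.2, qRS n g (X.1 + X.2)).

Definition Farrow (k : nzRingType) (n g : nat) (a : arrowQ) : nat -> nat -> k :=
  let: (b, (r, s)) := a in
  if b then
    fun i j => bmat k ((i == j) && (pS n g s <= i <= qRS n g (r + s)))
  else if s == 0 then
    fun i j => bmat k ((n.+1 <= i <= qRS n g (r.+1 + (hh n g).-1)) && (j == i - n.+1))
  else
    fun i j => bmat k ((i == j) && (pS n g s <= i <= qRS n g (r.+1 + s.-1))).

Definition idc (k : nzRingType) (V : nat * nat) : nat -> nat -> k :=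
  fun i j => bmat k ((i == j) && (V.1 <= i <= V.2)).

Fixpoint Fpath (k : nzRingType) (n g : nat) (X : nat * nat) (p : seq arrowQ)
    : nat -> nat -> k :=
  match p with
  | [::] => idc k (Fobj n g X)
  | a :: p' => let B := Fobj n g (tgtA n g a) in
               compc B.1 B.2 (Farrow k n g a) (Fpath k n g (tgtA n g a) p')
  end.

(* elements of kQ(X,Y): formal k-linear combinations of paths *)
Definition Flin (k : nzRingType) (n g : nat) (X : nat * nat)
    (c : seq (k * seq arrowQ)) : nat -> nat -> k :=
  fun i j => (\sum_(t <- c) t.1 * Fpath k n g X t.2 i j)%R.

Definition coefc (k : nzRingType) (c : seq (k * seq arrowQ)) (p : seq arrowQ) : k :=
  (\sum_(t <- c | t.2 == p) t.1)%R.

Definition splus (n g s : nat) : nat := if s.+1 < hh n g then s.+1 else 0.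

(* relation ids: (true,(r,s)) = relation (i) at (r,s);
                 (false,(r,s)) = relation (ii) at s (requires r = 0) *)
Definition relQ := (bool * (nat * nat))%type.

Definition rel_terms (k : nzRingType) (n g : nat) (x : relQ) : seq (k * seq arrowQ) :=
  let: (b, (r, s)) := x in
  if b then
    [:: (1%R, [:: Rho r.+1 s; Pi r.+1 (splus n g s)]);
        ((-1)%R, [:: Pi r (splus n g s); Rho r (splus n g s)])]
  else [:: (1%R, [:: Rho 0 s; Pi 0 (splus n g s)])].

Definition rel_src (x : relQ) : nat * nat :=
  let: (b, (r, s)) := x in if b then (r.+1, s) else (0, s).
Definition rel_tgt (n g : nat) (x : relQ) : nat * nat :=
  let: (b, (r, s)) := x in if b then (r.+1, splus n g s) else (0, splus n g s).

Definition rel_valid (n g m : nat) (x : relQ) : bool :=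
  let: (b, (r, s)) := x in
  if b then
    [&& s < hh n g, validA n g m (Rho r.+1 s), validA n g m (Pi r.+1 (splus n g s)),
        validA n g m (Pi r (splus n g s)) & validA n g m (Rho r (splus n g s))]
  else [&& r == 0, s < hh n g, validA n g m (Rho 0 s) & validA n g m (Pi 0 (splus n g s))].

(* generator of the ideal: a * (u o rel o v), with v : X -> src rel, u : tgt rel -> Y *)
Definition gen_terms (k : nzRingType) (n g : nat)
    (G : k * seq arrowQ * relQ * seq arrowQ) : seq (k * seq arrowQ) :=
  let: (a, v, x, u) := G in
  map (fun t => ((a * t.1)%R, v ++ t.2 ++ u)) (rel_terms k n g x).

Definition gen_valid (k : nzRingType) (n g m : nat) (X Y : nat * nat)
    (G : k * seq arrowQ * relQ * seq arrowQ) : bool :=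
  let: (a, v, x, u) := G in
  [&& isPath n g m X (rel_src x) v, rel_valid n g m x & isPath n g m (rel_tgt n g x) Y u].

Definition inIdeal (k : nzRingType) (n g m : nat) (X Y : nat * nat)
    (c : seq (k * seq arrowQ)) : Prop :=
  exists gs : seq (k * seq arrowQ * relQ * seq arrowQ),
    all (@gen_valid k n g m X Y) gs /\
    forall p, coefc c p = coefc (flatten (map (@gen_terms k n g) gs)) p.

From HB Require Import structures.
From mathcomp Require Import all_boot all_order all_algebra.
From mathcomp Require Import zify.
Set Implicit Arguments. Unset Strict Implicit. Unset Printing Implicit Defensive.
Import GRing.Theory.

(* F_oo sends every arrow, hence every path P of Q_m^oo, to a shift map
   e_i |-> e_(i-D), where D = (n+1) * (number of arrows pi(r,0) in P) and the
   range of i depends only on the end points of P.  Conversely, a morphism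
   V_(p,q) -> V_(p',q') of representations of K is constant along the diagonals
   i - j = (n+1) w and vanishes on the boundary of its support, so it is a
   combination of shift maps: this gives fullness.  Modulo the relations every
   path is zero or equal to a normal path pi^a rho^b, and the normal paths with
   given end points have pairwise distinct shifts, hence linearly independent
   images: so the kernel of F_oo is exactly the ideal. *)

(** * Arithmetic of the end points *)

Section Period.
Variables n g : nat.
Local Notation h := (hh n g).

Lemma pS_le s : pS n g s <= g + s.
Proof. by rewrite /pS; case: (s =P 0); lia. Qed.

Hypothesis gn : g <= n.

Lemma hh_gt0 : 0 < h.
Proof. rewrite /hh; lia. Qed.

Lemma hh_add : n.+1 = h + g.
Proof. rewrite /hh; lia. Qed.

Lemma qRSE t : qRS n g t = g + t + g * (t %/ h).
Proof. rewrite /qRS {1}hh_add mulnDl; have := divn_eq t h; lia. Qed.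

Lemma leq_qRS t t' : (qRS n g t <= qRS n g t') = (t <= t').
Proof.
rewrite !qRSE; apply/idP/idP => [|le_tt']; last by have := leq_div2r h le_tt'; nia.
by apply: contraTT; rewrite -!ltnNge => lt_t't; have := leq_div2r h (ltnW lt_t't); nia.
Qed.

Lemma qRSD t w : qRS n g (t + h * w) = qRS n g t + n.+1 * w.
Proof.
rewrite /qRS [t + _]addnC mulnC modnMDl divnMDl ?hh_gt0 //; lia.
Qed.

Lemma qRS_small s : s < h -> qRS n g s = g + s.
Proof. by move=> lt_sh; rewrite /qRS modn_small // divn_small //; lia. Qed.

Lemma qRS_mod t : g <= qRS n g t %% n.+1.
Proof.
rewrite /qRS addnC mulnC modnMDl modn_small; first lia.
by have := ltn_pmod t hh_gt0; rewrite hh_add; lia.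
Qed.

Lemma pS_cases s : s < h -> (pS n g s == 0) || (g < pS n g s <= n).
Proof. by move=> lt_sh; have := hh_add; rewrite /pS; case: (s =P 0) => /=; lia. Qed.

Lemma src_Pi_splus r s : s < h -> srcA n g (Pi r (splus n g s)) = (r.+1, s).
Proof. by move=> lt_sh; rewrite /srcA /splus; case: ifP => //= ?; congr (_, _); lia. Qed.

End Period.

(** * Morphisms between the modules V_(p,q) *)

Section CoefficientMatrices.
Variable k : nzRingType.
Implicit Types (b c : bool) (f : nat -> nat -> k).

Lemma bmatT b : b -> bmat k b = 1%R.
Proof. by move->; apply: mulr1n. Qed.

Lemma bmatF : bmat k false = 0%R.
Proof. exact: mulr0n. Qed.

Lemma bmat_neq0 b : bmat k b != 0%R -> b.
Proof. by case: b; rewrite // /bmat mulr0n eqxx. Qed.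

Lemma bmatM b c : (bmat k b * bmat k c)%R = bmat k (b && c).
Proof. by case: b; case: c; rewrite /bmat /= ?mulr1 ?mul0r ?mulr0. Qed.

Lemma bmat_if b c : (if b then bmat k c else 0%R) = bmat k (b && c).
Proof. by case: b. Qed.

Lemma bmat_ifl b c (x : k) : (if b then bmat k c * x else 0)%R = (bmat k (b && c) * x)%R.
Proof. by case: b; rewrite ?mul0r. Qed.

Lemma bmat_ifr b c (x : k) : (if b then x * bmat k c else 0)%R = (x * bmat k (b && c))%R.
Proof. by case: b; rewrite ?mulr0. Qed.

Lemma big_single_seq (I : eqType) (r : seq I) (F : I -> k) i0 :
  uniq r -> (forall i, i != i0 -> F i = 0%R) ->
  (\sum_(i <- r) F i)%R = if i0 \in r then F i0 else 0%R.
Proof.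
move=> uniq_r F0; case: ifP => [r_i0 | /negbT r'i0].
  by rewrite (bigD1_seq i0) //= big1 ?addr0.
by rewrite big_seq big1 // => i r_i; apply: F0; apply: contraNneq r'i0 => <-.
Qed.

Lemma big_single_nat lo hi (F : nat -> k) j0 :
  (forall j, j != j0 -> F j = 0%R) ->
  (\sum_(lo <= j < hi) F j)%R = if lo <= j0 < hi then F j0 else 0%R.
Proof. by move=> F0; rewrite (big_single_seq (iota_uniq _ _) F0) mem_index_iota. Qed.

Lemma compc_ext pb qb f1 f1' f2 f2' i l :
  (forall i j, f1 i j = f1' i j) -> (forall i j, f2 i j = f2' i j) ->
  compc pb qb f1 f2 i l = compc pb qb f1' f2' i l.
Proof. by move=> E1 E2; apply: eq_bigr => j _; rewrite E1 E2. Qed.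

Lemma compc0 pb qb f i l : compc pb qb f (fun _ _ => 0%R) i l = 0%R.
Proof. by rewrite /compc big1 // => j _; rewrite mulr0. Qed.

Lemma comp0c pb qb f i l : compc pb qb (fun _ _ => 0%R) f i l = 0%R.
Proof. by rewrite /compc big1 // => j _; rewrite mul0r. Qed.

Lemma compcDr pb qb f f1 f2 i l :
  compc pb qb f (fun i j => f1 i j + f2 i j)%R i l
  = (compc pb qb f f1 i l + compc pb qb f f2 i l)%R.
Proof. by rewrite /compc -big_split; apply: eq_bigr => j _; rewrite mulrDr. Qed.

Lemma compcDl pb qb f f1 f2 i l :
  compc pb qb (fun i j => f1 i j + f2 i j)%R f i l
  = (compc pb qb f1 f i l + compc pb qb f2 f i l)%R.
Proof. by rewrite /compc -big_split; apply: eq_bigr => j _; rewrite mulrDl. Qed.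

Definition shiftc (lo hi D : nat) : nat -> nat -> k :=
  fun i j => bmat k ((j + D == i) && (lo <= i <= hi)).

Lemma shiftc_empty lo hi D i j : hi < lo -> shiftc lo hi D i j = 0%R.
Proof. by move=> lt_hi_lo; rewrite /shiftc (_ : lo <= i <= hi = false) ?andbF //; lia. Qed.

Lemma compc_shiftc pb qb lo1 hi1 D1 lo2 hi2 D2 i l :
  hi1 <= hi2 + D1 -> hi2 <= qb -> pb <= lo2 ->
  compc pb qb (shiftc lo1 hi1 D1) (shiftc lo2 hi2 D2) i l
  = shiftc (maxn lo1 (lo2 + D1)) hi1 (D1 + D2) i l.
Proof.
move=> hi12 hi2q pblo2; rewrite /compc (@big_single_nat _ _ _ (i - D1)).
  by rewrite /shiftc bmatM bmat_if; congr bmat; lia.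
by move=> j /eqP ne; rewrite /shiftc bmatM -[RHS]/(bmat k false); congr bmat; lia.
Qed.

Section RepresentationMaps.
Variables (n p q x : nat).
Local Notation N := n.+1.

Lemma compc_betaMl f i l :
  compc p q (betaM k n p q x) f i l
  = (bmat k [&& p <= i < q & i %% N == x]%N * f i.+1 l)%R.
Proof.
rewrite /compc (@big_single_nat _ _ _ i.+1); last first.
  by move=> j /negbTE ne; rewrite /betaM ne !andbF mul0r.
by rewrite /betaM eqxx andbT bmat_ifl; congr (bmat _ _ * _)%R; lia.
Qed.

Lemma compc_betaMr f i l :
  compc p q f (betaM k n p q x) i l
  = (f i l.-1 * bmat k [&& p < l <= q & l.-1 %% N == x]%N)%R.
Proof.
rewrite /compc (@big_single_nat _ _ _ l.-1); last first.
  by move=> j /eqP ne; rewrite /betaM (_ : l == j.+1 = false) ?andbF ?mulr0 //; lia.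
by rewrite /betaM bmat_ifr; congr (_ * bmat _ _)%R; lia.
Qed.

Lemma compc_alphaMl f i l :
  compc p q (alphaM k n p q x) f i l
  = (bmat k [&& p < i <= q & i %% N == x.+1 %% N]%N * f i.-1 l)%R.
Proof.
rewrite /compc (@big_single_nat _ _ _ i.-1); last first.
  by move=> j /negbTE ne; rewrite /alphaM ne !andbF mul0r.
by rewrite /alphaM eqxx andbT bmat_ifl; congr (bmat _ _ * _)%R; lia.
Qed.

Lemma compc_alphaMr f i l :
  compc p q f (alphaM k n p q x) i l
  = (f i l.+1 * bmat k [&& p <= l < q & l.+1 %% N == x.+1 %% N]%N)%R.
Proof.
rewrite /compc (@big_single_nat _ _ _ l.+1); last first.
  move=> j /eqP ne; rewrite /alphaM (_ : (p < j) && (l == j.-1) = false) ?andbF ?mulr0 //.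
  lia.
by rewrite /alphaM bmat_ifr; congr (_ * bmat _ _)%R; lia.
Qed.

End RepresentationMaps.
End CoefficientMatrices.

Lemma modnSm m d : (m %% d).+1 %% d = m.+1 %% d.
Proof. by rewrite -addn1 modnDml addn1. Qed.

Lemma modn_subMr N i w : N * w <= i -> (i - N * w) %% N = i %% N.
Proof. by move=> le_i; rewrite -{2}(subnK le_i) addnC mulnC modnMDl. Qed.

Section HomAlgebra.
Variables (k : nzRingType) (n g : nat).
Implicit Types (V W : nat * nat) (f : nat -> nat -> k).

Lemma isHom_ext V W f f' :
  (forall i j, f i j = f' i j) -> isHom n g V W f -> isHom n g V W f'.
Proof.
case: V W => p q [p' q'] E [S [B A]]; split; first by move=> i j; rewrite -E; apply: S.
have E' i j : f' i j = f i j by rewrite E.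
by split=> x Hx i l; rewrite (compc_ext _ _ _ _ (fun _ _ => erefl) E')
  (compc_ext _ _ _ _ E' (fun _ _ => erefl)) ?B ?A.
Qed.

Lemma isHom0 V W : isHom n g V W (fun _ _ => 0%R : k).
Proof.
case: V W => p q [p' q']; split=> [i j|]; first by rewrite eqxx.
by split=> x _ i l; rewrite compc0 comp0c.
Qed.

Lemma isHomD V W f1 f2 :
  isHom n g V W f1 -> isHom n g V W f2 -> isHom n g V W (fun i j => f1 i j + f2 i j)%R.
Proof.
case: V W => p q [p' q'] [S1 [B1 A1]] [S2 [B2 A2]]; split.
  move=> i j; case: (eqVneq (f1 i j) 0%R) => [-> | /S1] //.
  by rewrite add0r => /S2.
by split=> x Hx i l; rewrite compcDr compcDl ?B1 ?B2 ?A1 ?A2.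
Qed.

End HomAlgebra.

Lemma isHomZ (k : comNzRingType) n g V W (f : nat -> nat -> k) a :
  isHom n g V W f -> isHom n g V W (fun i j => a * f i j)%R.
Proof.
have compcZr pb qb (c : nat -> nat -> k) i l :
    compc pb qb c (fun i j => a * f i j)%R i l = (a * compc pb qb c f i l)%R.
  by rewrite /compc mulr_sumr; apply: eq_bigr => j _; rewrite mulrCA.
have compcZl pb qb (c : nat -> nat -> k) i l :
    compc pb qb (fun i j => a * f i j)%R c i l = (a * compc pb qb f c i l)%R.
  by rewrite /compc mulr_sumr; apply: eq_bigr => j _; rewrite mulrA.
case: V W => p q [p' q'] [S [B A]]; split.
  by move=> i j faij; apply: S; apply: contraNneq faij => ->; rewrite mulr0.
by split=> x Hx i l; rewrite compcZr compcZl ?B ?A.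
Qed.

(* The shifts for which [shiftc k (p' + (n+1) w) q ((n+1) w)] is a nonzero
   morphism V_(p,q) -> V_(p',q'). *)
Definition admissible n (V W : nat * nat) w :=
  [&& V.1 <= W.1 + n.+1 * w, W.1 + n.+1 * w <= V.2 & V.2 <= W.2 + n.+1 * w].

Section IntervalHoms.
Variables (k : nzRingType) (n g p q p' q' : nat).
Local Notation N := n.+1.
Implicit Type f : nat -> nat -> k.

Lemma isHomP f : isHom n g (p, q) (p', q') f <->
  [/\ forall i j, f i j != 0%R -> [&& p <= i <= q, p' <= j <= q' & i %% N == j %% N],
      forall x, x < g -> forall i l,
        (bmat k [&& p <= i < q & i %% N == x]%N * f i.+1 l
         = f i l.-1 * bmat k [&& p' < l <= q' & l.-1 %% N == x]%N)%R
    & forall x, g <= x <= n -> forall i l,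
        (bmat k [&& p < i <= q & i %% N == x.+1 %% N]%N * f i.-1 l
         = f i l.+1 * bmat k [&& p' <= l < q' & l.+1 %% N == x.+1 %% N]%N)%R].
Proof.
rewrite /isHom; split=> [[S [B A]] | [S B A]].
  split=> // [x lt_xg i l | x le_x i l].
    by rewrite -compc_betaMl -compc_betaMr B.
  by rewrite -compc_alphaMl -compc_alphaMr A.
split=> //; split=> [x lt_xg i l | x le_x i l].
  by rewrite compc_betaMl compc_betaMr B.
by rewrite compc_alphaMl compc_alphaMr A.
Qed.

Lemma below_bottom_mod w i : g <= n -> (p' == 0) || (g < p' <= n) ->
  i.+1 = p' + N * w -> g <= i %% N.
Proof.
move=> gn p'_cases Ei; case/orP: p'_cases => [/eqP p'0 | lt_gp'].
  case: w Ei => [|w] Ei; first lia.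
  by rewrite (_ : i = w * N + n) ?modnMDl ?modn_small; lia.
by rewrite (_ : i = w * N + p'.-1) ?modnMDl ?modn_small; lia.
Qed.

Lemma shiftc_hom w : g <= n -> (p' == 0) || (g < p' <= n) -> g <= q %% N ->
  p <= p' + N * w -> q <= q' + N * w ->
  isHom n g (p, q) (p', q') (shiftc k (p' + N * w) q (N * w)).
Proof.
move=> gn p'_cases q_mod le_p le_q; apply/isHomP; split.
- move=> i j /bmat_neq0 /andP [/eqP <- rng].
  by rewrite [j + _]addnC mulnC modnMDl eqxx andbT; lia.
- move=> x lt_xg i l; rewrite /shiftc !bmatM; congr bmat.
  have lo := @below_bottom_mod w i gn p'_cases.
  have hi : i = q -> g <= i %% N by move->.
  have shift_mod := @modn_subMr N i w.
  clear gn p'_cases q_mod; move: (N * w) lo hi shift_mod le_p le_q => D lo hi shift_mod le_p le_q.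
  case: (leqP D i) => [le_Di | lt_iD].
    case: (eqVneq l.-1 (i - D)) => [El | ne].
      by rewrite El shift_mod //; move: (i %% N) lo hi => r lo hi; lia.
    by move: (i %% N) (l.-1 %% N) lo hi => r r' lo hi; lia.
  by move: (i %% N) (l.-1 %% N) lo hi => r r' lo hi; lia.
- move=> x le_x i l; rewrite /shiftc !bmatM; congr bmat.
  have shift_mod := @modn_subMr N i w.
  clear gn p'_cases q_mod; move: (N * w) shift_mod le_p le_q => D shift_mod le_p le_q.
  case: (eqVneq l.+1 (i - D)) => [El | ne].
    have le_Di : D <= i by lia.
    by rewrite El shift_mod //; move: (i %% N) (x.+1 %% N) => r r'; lia.
  by move: (i %% N) (x.+1 %% N) (l.+1 %% N) => r r' r''; lia.
Qed.

End IntervalHoms.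

Section HomClassification.
Variables (k : nzRingType) (n g p q p' q' : nat) (f : nat -> nat -> k).
Hypothesis homf : isHom n g (p, q) (p', q') f.
Local Notation N := n.+1.

Let beta := let: And3 _ B _ := iffLR (isHomP _ _ _ _ _ _ _) homf in B.
Let alpha := let: And3 _ _ A := iffLR (isHomP _ _ _ _ _ _ _) homf in A.

(* Commutation with the arrow of K at vertex i mod (n+1): beta below g, alpha above. *)
Lemma hom_diag i j : p <= i < q -> p' <= j < q' -> i %% N = j %% N ->
  f i j = f i.+1 j.+1.
Proof.
move=> lt_i lt_j eq_ij; have le_iN : i %% N <= n by rewrite -ltnS ltn_pmod.
case: (ltnP (i %% N) g) => [lt_ig | le_gi].
  have ci : [&& p <= i < q & i %% N == i %% N] by rewrite eqxx andbT.
  have cj : [&& p' < j.+1 <= q' & j.+1.-1 %% N == i %% N].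
    by rewrite /= eq_ij eqxx andbT; lia.
  by have := beta lt_ig i j.+1; rewrite !bmatT // mul1r mulr1.
have ci : [&& p < i.+1 <= q & i.+1 %% N == (i %% N).+1 %% N].
  by rewrite modnSm eqxx andbT; lia.
have cj : [&& p' <= j < q' & j.+1 %% N == (i %% N).+1 %% N].
  by rewrite eq_ij modnSm eqxx andbT; lia.
by have := alpha (introT andP (conj le_gi le_iN)) i.+1 j; rewrite !bmatT // mul1r mulr1.
Qed.

Lemma hom_diagD i j d : p <= i -> i + d <= q -> p' <= j -> j + d <= q' ->
  i %% N = j %% N -> f i j = f (i + d) (j + d).
Proof.
elim: d => [|d IH] le_i le_id le_j le_jd eq_ij; first by rewrite !addn0.
rewrite IH ?addnS; try lia.
by apply: hom_diag; [lia | lia | rewrite -modnDml eq_ij modnDml].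
Qed.

Lemma hom_top_boundary i : g <= q' %% N -> p <= i < q -> i %% N = q' %% N ->
  f i q' = 0%R.
Proof.
move=> le_gq' lt_i eq_iq'.
have le_gi : g <= i %% N <= n by rewrite eq_iq' le_gq' -eq_iq' -ltnS ltn_pmod.
have ci : [&& p < i.+1 <= q & i.+1 %% N == (i %% N).+1 %% N].
  by rewrite modnSm eqxx andbT; lia.
by have := alpha le_gi i.+1 q'; rewrite bmatT // mul1r ltnn andbF andFb bmatF mulr0.
Qed.

Lemma hom_bottom_boundary j : g <= n -> (p == 0) || (g < p <= n) -> p' < j <= q' ->
  j %% N = p -> f p j = 0%R.
Proof.
case: j => [|j] gn p_cases lt_j eq_jp; first lia.
have le_jN : j %% N <= n by rewrite -ltnS ltn_pmod.
have le_gj : g <= j %% N <= n.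
  rewrite le_jN andbT leqNgt; apply/negP => lt_jg.
  move: eq_jp; rewrite -modnSm modn_small; move: (j %% N) lt_jg => r lt_rg; lia.
have cj : [&& p' <= j < q' & j.+1 %% N == (j %% N).+1 %% N].
  by rewrite modnSm eqxx andbT; lia.
by have := alpha le_gj p j; rewrite ltnn andFb bmatF mul0r bmatT // mulr1.
Qed.

Lemma hom_support i j : f i j != 0%R ->
  [&& p <= i <= q, p' <= j <= q' & i %% N == j %% N].
Proof. by case: (iffLR (isHomP _ _ _ _ _ _ _) homf) => S _ _; apply: S. Qed.

Lemma hom_entry_top i j : p <= i <= q -> p' <= j -> j + (q - i) <= q' ->
  i %% N = j %% N -> f i j = f q (j + (q - i)).
Proof. by move=> le_i le_j le_jq eq_ij; rewrite {1}(hom_diagD (d := q - i)) ?subnKC //; lia. Qed.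

Lemma hom_below_top i j : g <= q' %% N -> f i j != 0%R -> q - i <= q' - j.
Proof.
move=> le_gq' /[dup] fij /hom_support /and3P [le_i le_j /eqP eq_ij].
rewrite leqNgt; apply: contraNN fij => lt_j; apply/eqP.
have eq_mod : (i + (q' - j)) %% N = q' %% N.
  by rewrite -modnDml eq_ij modnDml subnKC; lia.
rewrite (@hom_diagD i j (q' - j)) ?subnKC ?hom_top_boundary //; lia.
Qed.

Lemma hom_above_bottom i j : g <= n -> (p == 0) || (g < p <= n) -> f i j != 0%R ->
  j - p' <= i - p.
Proof.
move=> gn p_cases /[dup] fij /hom_support /and3P [le_i le_j /eqP eq_ij].
rewrite leqNgt; apply: contraNN fij => lt_ij; apply/eqP.
have le_pi : p <= i by lia.
have le_dj : i - p <= j by lia.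
have eq_mod : p %% N = (j - (i - p)) %% N.
  by apply/eqP; rewrite -(eqn_modDr (i - p)) subnKC // subnK // eq_ij.
have := @hom_diagD p (j - (i - p)) (i - p); rewrite subnKC // subnK // => <- //; try lia.
rewrite hom_bottom_boundary //; try lia.
by rewrite -eq_mod modn_small //; case/orP: p_cases; lia.
Qed.

Lemma hom_entry_band w i j : admissible n (p, q) (p', q') w -> j + N * w = i ->
  p' + N * w <= i <= q -> f i j = f q (q - N * w).
Proof.
rewrite /admissible /= => /and3P [le_p le_pq le_q] Ei le_i.
have eq_ij : i %% N = j %% N by rewrite -Ei addnC mulnC modnMDl.
rewrite hom_entry_top //; try lia.
by congr f; lia.
Qed.

Lemma hom_entry_shift i j : g <= n -> (p == 0) || (g < p <= n) -> g <= q' %% N ->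
  p' <= n -> f i j != 0%R ->
  exists2 w, admissible n (p, q) (p', q') w & j + N * w = i /\ f i j = f q (q - N * w).
Proof.
move=> gn p_cases le_gq' le_p'n fij.
have /and3P [le_i le_j /eqP eq_ij] := hom_support fij.
have up := hom_below_top le_gq' fij; have down := hom_above_bottom gn p_cases fij.
have le_ji : j <= i.
  rewrite leqNgt; apply/negP => lt_ij.
  have : N %| j - i by rewrite -eqn_mod_dvd ?eq_ij //; lia.
  by move/dvdn_leq; lia.
have /dvdnP [w Ew] : N %| i - j by rewrite -eqn_mod_dvd ?eq_ij.
have adm : admissible n (p, q) (p', q') w.
  by rewrite /admissible /=; clear -Ew up down le_i le_j le_ji; lia.
exists w => //; split; first lia.
by apply: hom_entry_band adm _ _; lia.
Qed.

End HomClassification.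

(** * Images of paths *)

(* The arrows pi(r,0) are the only ones whose image lowers indices, by n+1. *)
Definition wraps (a : arrowQ) : bool := ~~ a.1 && (a.2.2 == 0).

Definition path_shift n (p : seq arrowQ) : nat := n.+1 * count wraps p.

Lemma path_shift_cat n v w : path_shift n (v ++ w) = path_shift n v + path_shift n w.
Proof. by rewrite /path_shift count_cat mulnDr. Qed.

Section PathImages.
Variables (k : nzRingType) (n g m : nat).
Hypothesis gn : g <= n.
Local Notation N := n.+1.
Local Notation src := (srcA n g).
Local Notation tgt := (tgtA n g).

Lemma Farrow_shift a : validA n g m a ->
  [/\ forall i j, Farrow k n g a i j =
        shiftc k (pS n g (tgt a).2 + N * wraps a) (Fobj n g (src a)).2 (N * wraps a) i j,
      (Fobj n g (src a)).2 <= (Fobj n g (tgt a)).2 + N * wraps a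
    & pS n g (src a).2 <= pS n g (tgt a).2 + N * wraps a].
Proof.
have hA := hh_add gn.
case: a => [[] [r s]] /andP [Hs Ht]; rewrite /Farrow /wraps /=.
  rewrite muln0 !addn0; split=> [i j||] //; last by rewrite leq_qRS //; lia.
  by rewrite /shiftc addn0; congr bmat; lia.
case: s Hs Ht => [|s] Hs Ht /=; rewrite ?muln1 ?muln0 ?addn0.
  split=> [i j||]; first by rewrite /shiftc /pS /=; congr bmat; lia.
    by rewrite -[X in _ <= _ + X]muln1 -qRSD // leq_qRS //; lia.
  by rewrite /pS /=; case: ifP; lia.
split=> [i j||]; first by rewrite /shiftc addn0 /=; congr bmat; lia.
  by rewrite addSnnS.
by rewrite /pS /=; case: ifP; lia.
Qed.

Lemma Fpath_shift p X Y : pathb n g m X Y p ->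
  [/\ forall i j, Fpath k n g X p i j =
        shiftc k (pS n g Y.2 + path_shift n p) (Fobj n g X).2 (path_shift n p) i j,
      pS n g X.2 <= pS n g Y.2 + path_shift n p
    & (Fobj n g X).2 <= (Fobj n g Y).2 + path_shift n p].
Proof.
elim: p X => [|a p IH] X /=.
  move=> /eqP <-; rewrite /path_shift muln0 !addn0; split=> // i j.
  by rewrite /idc /shiftc addn0 [j == i]eq_sym.
case/and3P=> va /eqP <- /IH [F1 F2 F3].
have [A1 A2 A3] := Farrow_shift va.
have -> : path_shift n (a :: p) = N * wraps a + path_shift n p.
  by rewrite /path_shift /= mulnDr.
split=> [i j||]; last 2 first.
- by move: A3 F2; move: (N * wraps a) (path_shift n p) => D1 D2; lia.
- by move: A2 F3; rewrite /Fobj /=; move: (N * wraps a) (path_shift n p) => D1 D2; lia.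
rewrite (compc_ext _ _ _ _ A1 F1) compc_shiftc //.
rewrite /shiftc /Fobj /=; move: F2; move: (N * wraps a) (path_shift n p) => D1 D2 F2.
by congr bmat; lia.
Qed.

Lemma Fpath_hom p X Y : vertexQ n g m Y -> pathb n g m X Y p ->
  isHom n g (Fobj n g X) (Fobj n g Y) (Fpath k n g X p).
Proof.
move=> /andP [vY _] /Fpath_shift [F1 F2 F3].
apply: isHom_ext (fun i j => esym (F1 i j)) _.
exact: shiftc_hom (pS_cases gn vY) (qRS_mod gn _) F2 F3.
Qed.

End PathImages.

Lemma Flin_hom (k : comNzRingType) n g m X Y (c : seq (k * seq arrowQ)) : g <= n ->
  vertexQ n g m Y -> all (fun t => isPath n g m X Y t.2) c ->
  isHom n g (Fobj n g X) (Fobj n g Y) (Flin n g X c).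
Proof.
move=> gn vY; elim: c => [_ | t c IH /andP [/andP [_ pt] /IH homc]].
  by apply: isHom_ext (isHom0 _ _ _ _ _) => i j; rewrite /Flin big_nil.
apply: isHom_ext (isHomD (isHomZ t.1 (Fpath_hom k gn vY pt)) homc) => i j.
by rewrite /Flin big_cons.
Qed.

(** * Normal forms modulo the relations *)

Section Walks.
Variables n g m : nat.
Local Notation h := (hh n g).
Local Notation tgt := (tgtA n g).
Local Notation pathb := (pathb n g m).
Local Notation vertex := (vertexQ n g m).

(* A path is determined by its source and the kinds of its arrows
   ([true] for rho, [false] for pi). *)
Definition step (X : nat * nat) (b : bool) : arrowQ :=
  if b then Rho X.1 X.2 else Pi X.1.-1 (splus n g X.2).

Fixpoint walk (X : nat * nat) (bs : seq bool) : seq arrowQ :=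
  if bs is b :: bs' then step X b :: walk (tgt (step X b)) bs' else [::].

Fixpoint walk_end (X : nat * nat) (bs : seq bool) : nat * nat :=
  if bs is b :: bs' then walk_end (tgt (step X b)) bs' else X.

Definition normal_path X a b := walk X (nseq a false ++ nseq b true).

Lemma pathb_cat v w X Z Y : pathb X Z v -> pathb Z Y w -> pathb X Y (v ++ w).
Proof.
elim: v X => [|a v IH] X /=; first by move=> /eqP ->.
by case/and3P=> -> -> /IH H /H.
Qed.

Lemma pathb_catP v w X Y : pathb X Y (v ++ w) -> exists2 Z, pathb X Z v & pathb Z Y w.
Proof.
elim: v X => [|a v IH] X /=; first by exists X.
by case/and3P=> va sa /IH [Z pv pw]; exists Z; rewrite ?va ?sa.
Qed.

Lemma walk_cat bs1 bs2 X : walk X (bs1 ++ bs2) = walk X bs1 ++ walk (walk_end X bs1) bs2.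
Proof. by elim: bs1 X => [|b bs IH] X //=; rewrite IH. Qed.

Lemma pathb_walk_end bs X Y : pathb X Y (walk X bs) -> Y = walk_end X bs.
Proof. by elim: bs X => [|b bs IH] X /=; [move/eqP | case/and3P=> _ _ /IH]. Qed.

Lemma vertexQ_le r r' s : vertex (r', s) -> r <= r' -> vertex (r, s).
Proof. by rewrite /vertexQ /=; lia. Qed.

Hypothesis gn : g <= n.

Lemma step_of_validA a X : validA n g m a -> srcA n g a = X -> a = step X a.1.
Proof.
case: a => [[] [r s]] /andP [vs vt] <- //=.
case: s vs vt => [|s] vs vt /=; first by rewrite /splus prednK ?hh_gt0 // ltnn.
by case/andP: vt => /= lt_s _; rewrite /splus lt_s.
Qed.

Lemma walk_of_pathb p X Y : pathb X Y p -> p = walk X (map fst p).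
Proof.
elim: p X => [|a p IH] X //= /and3P [va /eqP sa /IH {1}->].
by rewrite -(step_of_validA va sa).
Qed.

Lemma walk_pis a r s : vertex (r, s) -> a <= r ->
  [/\ pathb (r, s) (r - a, (s + a) %% h) (walk (r, s) (nseq a false)),
      walk_end (r, s) (nseq a false) = (r - a, (s + a) %% h)
    & count wraps (walk (r, s) (nseq a false)) = (s + a) %/ h].
Proof.
have hp := hh_gt0 gn.
elim: a r s => [|a IH] r s vX le_ar.
  by case/andP: vX => /= lt_s _; rewrite /= subn0 addn0 modn_small // divn_small // eqxx.
case: r vX le_ar => [|r] vX //= le_ar.
have lt_s : s < h by case/andP: vX.
have vT : vertex (r, splus n g s) by move: vX; rewrite /vertexQ /splus /=; case: ifP; lia.
have [p1 e1 c1] := IH r (splus n g s) vT le_ar.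
have [E1 E2] : (splus n g s + a) %% h = (s + a.+1) %% h /\
    wraps (Pi r (splus n g s)) + (splus n g s + a) %/ h = (s + a.+1) %/ h.
  rewrite /wraps /splus /=; case: ifP => lt_s1 /=; first by rewrite addSnnS.
  by rewrite (_ : s + a.+1 = 1 * h + a) ?modnMDl ?divnMDl //; lia.
rewrite -E1 e1 -E2 c1 subSS; split=> //.
have sP := src_Pi_splus gn r lt_s; rewrite /srcA /= in sP.
by rewrite /validA /= sP vX vT eqxx p1.
Qed.

Lemma walk_end_rhos b r s : walk_end (r, s) (nseq b true) = (r + b, s).
Proof. by elim: b r => [|b IH] r /=; rewrite ?addn0 // IH addSnnS. Qed.

Lemma count_wraps_rhos b r s : count wraps (walk (r, s) (nseq b true)) = 0.
Proof. by elim: b r => [|b IH] r //=; rewrite IH. Qed.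

Lemma pathb_rhos b r s : vertex (r + b, s) -> pathb (r, s) (r + b, s) (walk (r, s) (nseq b true)).
Proof.
elim: b r => [|b IH] r vY /=; first by rewrite addn0 eqxx.
rewrite eqxx /validA /= !(vertexQ_le vY) /=; try lia.
by rewrite -addSnnS IH // addSnnS.
Qed.

Lemma pis_le_row a bs r s Y : pathb (r, s) Y (walk (r, s) (nseq a false ++ bs)) -> a <= r.
Proof.
elim: a r s => [|a IH] [|r] s //=; first by case/and3P=> _; case: ifP.
by case/and3P=> _ _ /IH.
Qed.

Lemma normal_path_info a b r s Y : vertex (r, s) ->
  pathb (r, s) Y (normal_path (r, s) a b) ->
  [/\ a <= r, Y = (r - a + b, (s + a) %% h)
    & count wraps (normal_path (r, s) a b) = (s + a) %/ h].
Proof.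
move=> vX pY; have le_ar := pis_le_row pY.
have [p1 e1 c1] := walk_pis vX le_ar.
move: pY; rewrite /normal_path walk_cat e1 => /pathb_catP [Z pZ1 pZ2].
move: (pathb_walk_end pZ1) pZ2; rewrite e1 => -> /pathb_walk_end ->.
rewrite walk_end_rhos.
by rewrite count_cat c1 count_wraps_rhos addn0.
Qed.

Lemma pathb_normal_path a b r s Y : vertex (r, s) -> vertex Y ->
  a <= r -> Y = (r - a + b, (s + a) %% h) ->
  pathb (r, s) Y (normal_path (r, s) a b) /\
  count wraps (normal_path (r, s) a b) = (s + a) %/ h.
Proof.
move=> vX vY le_ar EY; have [p1 e1 c1] := walk_pis vX le_ar.
rewrite /normal_path walk_cat e1 count_cat c1 count_wraps_rhos addn0; split=> //.
by apply: pathb_cat p1 _; rewrite EY; apply: pathb_rhos; rewrite -EY.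
Qed.

End Walks.

Section Coefficients.
Variable k : nzRingType.
Implicit Types (c : seq (k * seq arrowQ)) (a : k) (p q : seq arrowQ).

Lemma coefc0 p : coefc ([::] : seq (k * seq arrowQ)) p = 0%R.
Proof. exact: big_nil. Qed.

Lemma coefc1 a q p : coefc [:: (a, q)] p = if q == p then a else 0%R.
Proof. by rewrite /coefc big_cons big_nil /=; case: eqP; rewrite ?addr0. Qed.

Lemma coefc_cat c1 c2 p : coefc (c1 ++ c2) p = (coefc c1 p + coefc c2 p)%R.
Proof. exact: big_cat. Qed.

Definition scalec a c := [seq (a * t.1, t.2)%R | t <- c].

Lemma coefc_scale a c p : coefc (scalec a c) p = (a * coefc c p)%R.
Proof. by rewrite /coefc big_map mulr_sumr. Qed.

Definition consc (e : arrowQ) c := [seq (t.1, e :: t.2) | t <- c].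

Lemma coefc_consc_nil e c : coefc (consc e c) [::] = 0%R.
Proof. by rewrite /coefc big_map big1. Qed.

Lemma coefc_consc e e' p c :
  coefc (consc e c) (e' :: p) = if e == e' then coefc c p else 0%R.
Proof.
rewrite /coefc big_map; case: eqP => [<- | ne].
  by apply: eq_bigl => t /=; rewrite eqseq_cons eqxx.
by rewrite big1 // => t /=; rewrite eqseq_cons => /andP [/eqP].
Qed.

End Coefficients.

Section IdealCongruence.
Variables (k : nzRingType) (n g m : nat).
Local Notation gens := (seq (k * seq arrowQ * relQ * seq arrowQ)).
Local Notation terms gs := (flatten (map (@gen_terms k n g) gs)).
Implicit Types (c : seq (k * seq arrowQ)) (X Y : nat * nat).

Definition eqmodI X Y c1 c2 := exists gs : gens,
  all (gen_valid n g m X Y) gs /\ forall p, coefc c1 p = (coefc c2 p + coefc (terms gs) p)%R.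

Lemma inIdealE X Y c : inIdeal n g m X Y c <-> eqmodI X Y c [::].
Proof.
by split=> [] [gs [V E]]; exists gs; split=> // p; rewrite E coefc0 ?add0r.
Qed.

Lemma eqmodI_refl X Y c : eqmodI X Y c c.
Proof. by exists [::]; split=> // p; rewrite coefc0 addr0. Qed.

Lemma eqmodI_trans X Y c1 c2 c3 : eqmodI X Y c1 c2 -> eqmodI X Y c2 c3 -> eqmodI X Y c1 c3.
Proof.
move=> [gs1 [V1 E1]] [gs2 [V2 E2]]; exists (gs2 ++ gs1); split; first by rewrite all_cat V1 V2.
by move=> p; rewrite E1 E2 map_cat flatten_cat coefc_cat addrA.
Qed.

Lemma eqmodI_cat X Y c1 c1' c2 c2' :
  eqmodI X Y c1 c1' -> eqmodI X Y c2 c2' -> eqmodI X Y (c1 ++ c2) (c1' ++ c2').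
Proof.
move=> [gs1 [V1 E1]] [gs2 [V2 E2]]; exists (gs1 ++ gs2); split; first by rewrite all_cat V1 V2.
by move=> p; rewrite !coefc_cat E1 E2 map_cat flatten_cat coefc_cat addrACA.
Qed.

Lemma eq_eqmodI X Y c1 c1' c2 c2' :
  (forall p, coefc c1 p = coefc c1' p) -> (forall p, coefc c2 p = coefc c2' p) ->
  eqmodI X Y c1 c2 -> eqmodI X Y c1' c2'.
Proof. by move=> E1 E2 [gs [V E]]; exists gs; split=> // p; rewrite -E1 -E2 E. Qed.

Lemma eqmodI0 X Y c : (forall p, coefc c p = 0%R) -> eqmodI X Y c [::].
Proof. by move=> c0; apply: eq_eqmodI (eqmodI_refl X Y [::]) => p; rewrite ?c0 coefc0. Qed.

Lemma eqmodI_scale X Y a c1 c2 : eqmodI X Y c1 c2 -> eqmodI X Y (scalec a c1) (scalec a c2).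
Proof.
move=> [gs [V E]]; exists [seq (a * G.1.1.1, G.1.1.2, G.1.2, G.2)%R | G <- gs]; split.
  by rewrite all_map; apply: sub_all V => [[[[b v] x] u]].
have -> : terms [seq (a * G.1.1.1, G.1.1.2, G.1.2, G.2)%R | G <- gs] = scalec a (terms gs).
  rewrite /scalec map_flatten -!map_comp; congr flatten; apply: eq_map => [[[[b v] x] u]] /=.
  by rewrite /gen_terms -map_comp; apply: eq_map => t /=; rewrite mulrA.
by move=> p; rewrite !coefc_scale E mulrDr.
Qed.

Lemma eqmodI_cons e X Y c1 c2 : validA n g m e -> srcA n g e = X -> vertexQ n g m X ->
  eqmodI (tgtA n g e) Y c1 c2 -> eqmodI X Y (consc e c1) (consc e c2).
Proof.
move=> ve se vX [gs [V E]]; exists [seq (G.1.1.1, e :: G.1.1.2, G.1.2, G.2) | G <- gs]; split.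
  rewrite all_map; apply: sub_all V => [[[[b v] x] u]] /=.
  by rewrite /gen_valid /isPath /= ve se eqxx vX => /and3P [/andP [_ ->] -> ->].
have -> : terms [seq (G.1.1.1, e :: G.1.1.2, G.1.2, G.2) | G <- gs] = consc e (terms gs).
  rewrite /consc map_flatten -!map_comp; congr flatten; apply: eq_map => [[[[b v] x] u]] /=.
  by rewrite /gen_terms -map_comp.
case=> [|e' p]; first by rewrite !coefc_consc_nil addr0.
by rewrite !coefc_consc; case: eqP => _; rewrite ?E ?addr0.
Qed.

End IdealCongruence.

Section NormalForms.
Variables (k : nzRingType) (n g m : nat).
Hypothesis gn : g <= n.
Local Notation pathb := (pathb n g m).
Local Notation vertex := (vertexQ n g m).
Local Notation walk := (walk n g).
Local Notation normal_path := (normal_path n g).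
Local Notation eqmodI := (@eqmodI k n g m).
Local Notation "[ 'mono' p ]" := [:: (1%R : k, p)].

Lemma eqmodI_rho_pi0 s bs Y : vertex (0, s) ->
  pathb (0, s) Y (walk (0, s) (true :: false :: bs)) ->
  eqmodI (0, s) Y [mono walk (0, s) (true :: false :: bs)] [::].
Proof.
move=> v0 /=; rewrite eqxx /= => /and4P [vR vP _ pu].
exists [:: (1%R, [::], (false, (0, s)), walk (0, splus n g s) bs)]; split.
  rewrite /= andbT /gen_valid /isPath /= v0 eqxx vR vP pu /=.
  by case/andP: v0 => /= -> _; case/andP: vP => _ /= ->.
by move=> p; rewrite coefc0 add0r /= /gen_terms /= mulr1.
Qed.

Lemma eqmodI_rho_pi r s bs Y : vertex (r.+1, s) ->
  pathb (r.+1, s) Y (walk (r.+1, s) (true :: false :: bs)) ->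
  pathb (r.+1, s) Y (walk (r.+1, s) (false :: true :: bs)) /\
  eqmodI (r.+1, s) Y [mono walk (r.+1, s) (true :: false :: bs)]
                     [mono walk (r.+1, s) (false :: true :: bs)].
Proof.
move=> v0 /=; rewrite eqxx /= => /and4P [vR vP _ pu].
have lt_s : s < hh n g by case/andP: v0.
have sP := src_Pi_splus gn r lt_s; rewrite /srcA /= in sP.
have vT : vertex (r.+1, splus n g s) by case/andP: vP.
have vP' : validA n g m (Pi r (splus n g s)) by rewrite /validA /= sP v0 (vertexQ_le vT).
have vR' : validA n g m (Rho r (splus n g s)) by rewrite /validA /= vT (vertexQ_le vT).
split; first by rewrite /= vP' sP eqxx vR' eqxx pu.
exists [:: (1%R, [::], (true, (r, s)), walk (r.+1, splus n g s) bs)]; split.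
  by rewrite /= andbT /gen_valid /isPath /= v0 eqxx lt_s vR vP vP' vR' vT pu.
move=> p; rewrite /= /gen_terms /= !mulr1 /coefc !big_cons !big_nil /=.
set A := Rho r.+1 s :: _; set B := Pi r _ :: _.
by case: (A =P p) => [<- | _]; case: (B =P p) => [E | _] //=;
  rewrite ?addr0 ?add0r ?mulrN1 ?mul1r ?addrN.
Qed.

Lemma eqmodI_rho_pis a b X Y : vertex X ->
  pathb X Y (walk X (true :: nseq a false ++ nseq b true)) ->
  let p := walk X (true :: nseq a false ++ nseq b true) in
  eqmodI X Y [mono p] [::] \/
  pathb X Y (normal_path X a b.+1) /\ eqmodI X Y [mono p] [mono normal_path X a b.+1].
Proof.
elim: a X => [|a IH] [r s] vX pXY; first by right; split=> //; apply: eqmodI_refl.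
case: r vX pXY => [|r] vX pXY; first by left; apply: eqmodI_rho_pi0.
have [pXY' E1] := eqmodI_rho_pi vX pXY.
move: (pXY') => /= /and3P [ve /eqP se pT].
have vT : vertex (tgtA n g (step n g (r.+1, s) false)) by case/andP: ve.
have E2 := eqmodI_cons ve se vX.
case: (IH _ vT pT) => [/E2 E3 | [pT' /E2 E3]]; [left | right; split].
- exact: eqmodI_trans E1 E3.
- by rewrite /normal_path /= ve se eqxx.
- exact: eqmodI_trans E1 E3.
Qed.

Lemma eqmodI_walk bs X Y : vertex X -> pathb X Y (walk X bs) ->
  eqmodI X Y [mono walk X bs] [::] \/
  exists a b, pathb X Y (normal_path X a b) /\
    eqmodI X Y [mono walk X bs] [mono normal_path X a b].
Proof.
elim: bs X => [|b bs IH] X vX pXY; first by right; exists 0, 0; split=> //; apply: eqmodI_refl.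
move: (pXY) => /= /and3P [ve /eqP se pT].
have vT : vertex (tgtA n g (step n g X b)) by case/andP: ve.
case: (IH _ vT pT) => [/(eqmodI_cons ve se vX) E | [a [b' [pN /(eqmodI_cons ve se vX) E]]]].
  by left.
have pXY' : pathb X Y (walk X (b :: nseq a false ++ nseq b' true)).
  by rewrite /= ve se eqxx.
case: b ve se pT E pXY' {vT pN pXY} => ve se pT E pXY'; last by right; exists a.+1, b'.
case: (eqmodI_rho_pis vX pXY') => [E' | [pN' E']].
  by left; apply: eqmodI_trans E E'.
by right; exists a, b'.+1; split=> //; apply: eqmodI_trans E E'.
Qed.

Lemma eqmodI_normal_form X Y (c : seq (k * seq arrowQ)) :
  all (fun t => isPath n g m X Y t.2) c ->
  exists2 c' : seq (k * seq arrowQ), eqmodI X Y c c' &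
    forall t, t \in c' -> exists a b, t.2 = normal_path X a b /\ pathb X Y t.2.
Proof.
elim: c => [_ | [l p] c IH]; first by exists [::]; [apply: eqmodI_refl |].
move=> /andP [/= /andP [vX pXY] /IH [c' Ec Hc']].
have Ep := walk_of_pathb gn pXY; rewrite Ep in pXY; rewrite {1}Ep.
have scale1 q p' : coefc (scalec l [mono q]) p' = coefc [:: (l, q)] p'.
  by rewrite coefc_scale !coefc1; case: eqP; rewrite ?mulr1 ?mulr0.
case: (eqmodI_walk vX pXY) => [/(eqmodI_scale l) E | [a [b [pN /(eqmodI_scale l) E]]]].
  exists c'; last by [].
  apply: (eqmodI_cat (c1 := [:: _]) (c1' := [::])) Ec.
  by apply: eq_eqmodI E => p'; rewrite ?scale1.
exists ((l, normal_path X a b) :: c').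
  apply: (eqmodI_cat (c1 := [:: _]) (c1' := [:: _])) Ec.
  by apply: eq_eqmodI E => p'; rewrite scale1.
by move=> t; rewrite inE => /predU1P [-> | /Hc'] //; exists a, b.
Qed.

End NormalForms.

(** * Fullness and faithfulness *)

Section IdealInKernel.
Variables (k : nzRingType) (n g m : nat).
Hypothesis gn : g <= n.
Local Notation h := (hh n g).
Local Notation pathb := (pathb n g m).
Local Notation Fpath := (Fpath k n g).
Local Notation Flin := (@Flin k n g).
Implicit Types (c : seq (k * seq arrowQ)) (X Y : nat * nat).

Lemma Flin_cat X c1 c2 i j : Flin X (c1 ++ c2) i j = (Flin X c1 i j + Flin X c2 i j)%R.
Proof. exact: big_cat. Qed.

Lemma Flin_coefc X c (S : seq (seq arrowQ)) i j : uniq S -> {subset map snd c <= S} ->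
  Flin X c i j = (\sum_(p <- S) coefc c p * Fpath X p i j)%R.
Proof.
move=> uS; elim: c => [_ | t c IH sub_tc].
  by rewrite /Flin big_nil big1 // => p _; rewrite coefc0 mul0r.
rewrite /Flin big_cons -/(Flin X c i j) IH => [|p cp]; last by apply: sub_tc; rewrite inE cp orbT.
have -> : (\sum_(p <- S) coefc (t :: c) p * Fpath X p i j =
    \sum_(p <- S) (if t.2 == p then t.1 * Fpath X p i j else 0) +
    \sum_(p <- S) coefc c p * Fpath X p i j)%R.
  rewrite -big_split; apply: eq_bigr => p _ /=.
  by rewrite /coefc big_cons; case: ifP => _; rewrite ?mulrDl ?add0r.
congr (_ + _)%R; rewrite (big_single_seq uS (i0 := t.2)) ?sub_tc ?map_f ?mem_head ?eqxx //.
by move=> p /negbTE; rewrite eq_sym => ->.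
Qed.

Lemma Fpath_eq_shift p p' X Y : pathb X Y p -> pathb X Y p' ->
  path_shift n p = path_shift n p' -> forall i j, Fpath X p i j = Fpath X p' i j.
Proof.
by move=> /(Fpath_shift k gn) [F _ _] /(Fpath_shift k gn) [F' _ _] E i j; rewrite F F' E.
Qed.

Lemma pathb_rel_terms x : rel_valid n g m x ->
  all (fun t => pathb (rel_src x) (rel_tgt n g x) t.2) (rel_terms k n g x).
Proof.
case: x => [[] [r s]] /=.
  case/and5P=> lt_s vR vP vP' vR'.
  have sP := src_Pi_splus gn r lt_s; have sP' := src_Pi_splus gn r.+1 lt_s.
  rewrite /srcA /= in sP sP'.
  by rewrite vR vP vP' vR' sP sP' !eqxx.
case/and4P=> _ lt_s vR vP; have sP := src_Pi_splus gn 0 lt_s.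
by rewrite /srcA /= in sP; rewrite vR vP sP !eqxx.
Qed.

Lemma zero_relation_gap s : s < h ->
  g + s < pS n g (splus n g s) + path_shift n [:: Rho 0 s; Pi 0 (splus n g s)].
Proof.
by have := hh_add gn; rewrite /path_shift /wraps /pS /splus; case: (ltnP s.+1 h) => /=; lia.
Qed.

Lemma Flin_gen_terms X Y G i j : gen_valid n g m X Y G -> Flin X (@gen_terms k n g G) i j = 0%R.
Proof.
case: G => [[[a v] x] u] /and3P [/andP [vX pv] vx /andP [vT pu]].
have /allP pt := pathb_rel_terms vx.
have pt' t : t \in rel_terms k n g x -> pathb X Y (v ++ t.2 ++ u).
  by move=> /pt pt_t; apply: pathb_cat pv (pathb_cat pt_t pu).
rewrite /Flin /gen_terms big_map.
case: x vx pv pu vT pt pt' => [[] [r s]] /= vx pv pu vT pt pt'.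
  rewrite !big_cons big_nil /= mulr1 mulrN1 addr0 mulNr.
  rewrite (Fpath_eq_shift (pt' _ (mem_head _ _)) (pt' _ (mem_last _ _))) ?addrN //.
  by rewrite !path_shift_cat /path_shift.
case/and4P: vx => /eqP r0 lt_s _ _; subst r.
rewrite big_cons big_nil addr0 /=.
have [F1 _ _] := Fpath_shift k gn (pt' _ (mem_head _ _)).
have [_ _ Qv] := Fpath_shift k gn pv; have [_ Pu _] := Fpath_shift k gn pu.
rewrite F1 shiftc_empty ?mulr0 // !path_shift_cat.
move: Qv Pu (zero_relation_gap lt_s); rewrite /Fobj /= add0n (qRS_small gn lt_s).
by move: (path_shift n v) (path_shift n u) (path_shift n [:: _; _]) => Dv Du Dr; lia.
Qed.

Lemma eqmodI_Flin X Y c1 c2 i j : eqmodI n g m X Y c1 c2 -> Flin X c1 i j = Flin X c2 i j.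
Proof.
move=> [gs [V E]]; set T := flatten (map (@gen_terms k n g) gs).
have T0 : Flin X T i j = 0%R.
  rewrite {}/T {E}; elim: gs V => [|G gs IH] /=; first by rewrite /Flin big_nil.
  by case/andP=> vG vgs; rewrite Flin_cat (Flin_gen_terms _ _ vG) IH // addr0.
set S := undup (map snd (c1 ++ c2 ++ T)).
have FS c : {subset c <= c1 ++ c2 ++ T} ->
    Flin X c i j = (\sum_(p <- S) coefc c p * Fpath X p i j)%R.
  move=> cs; apply: Flin_coefc (undup_uniq _) _ => p /mapP [t /cs ct ->].
  by rewrite mem_undup map_f.
have sub1 : {subset c1 <= c1 ++ c2 ++ T} by move=> t ct; rewrite mem_cat ct.
have sub2 : {subset c2 <= c1 ++ c2 ++ T} by move=> t ct; rewrite !mem_cat ct orbT.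
have subT : {subset T <= c1 ++ c2 ++ T} by move=> t ct; rewrite !mem_cat ct !orbT.
rewrite (FS _ subT) in T0; rewrite (FS _ sub1) (FS _ sub2).
transitivity (\sum_(p <- S) coefc c2 p * Fpath X p i j +
              \sum_(p <- S) coefc T p * Fpath X p i j)%R; last by rewrite T0 addr0.
rewrite -big_split.
by apply: eq_bigr => p _; rewrite E mulrDl.
Qed.

End IdealInKernel.

Section HomDecomposition.
Variables (k : nzRingType) (n g p q p' q' : nat) (f : nat -> nat -> k).
Hypotheses (homf : isHom n g (p, q) (p', q') f) (gn : g <= n).
Hypotheses (p_cases : (p == 0) || (g < p <= n)) (le_gq' : g <= q' %% n.+1) (le_p'n : p' <= n).
Local Notation N := n.+1.

Definition admissible_shifts := [seq w <- iota 0 q.+1 | admissible n (p, q) (p', q') w].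

Lemma hom_shift_decomposition i j :
  f i j = (\sum_(w <- admissible_shifts) f q (q - N * w) * shiftc k (p' + N * w) q (N * w) i j)%R.
Proof.
have band w : w \in admissible_shifts ->
    (f q (q - N * w) * shiftc k (p' + N * w) q (N * w) i j
     = f i j * shiftc k (p' + N * w) q (N * w) i j)%R.
  rewrite mem_filter => /andP [adm _]; rewrite /shiftc.
  case: (boolP ((j + N * w == i) && (p' + N * w <= i <= q))) => [/andP [/eqP Ei le_i] | _].
    by rewrite (hom_entry_band homf adm Ei le_i).
  by rewrite bmatF !mulr0.
rewrite big_seq (eq_bigr _ band) -big_seq -mulr_sumr.
have [-> | fij] := eqVneq (f i j) 0%R; first by rewrite mul0r.
have [w0 adm [Ej _]] := hom_entry_shift homf gn p_cases le_gq' le_p'n fij.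
have /and3P [/andP [le_pi le_iq] /andP [le_j _] _] := hom_support homf fij.
have w0S : w0 \in admissible_shifts.
  rewrite mem_filter adm mem_iota /= add0n ltnS.
  by apply: leq_trans (_ : N * w0 <= q); [rewrite leq_pmull | lia].
rewrite (big_single_seq (filter_uniq _ (iota_uniq _ _)) (i0 := w0)).
  by rewrite w0S /shiftc bmatT ?mulr1 // Ej eqxx /=; lia.
move=> w ne; rewrite /shiftc (_ : j + N * w == i = false) ?bmatF //.
apply: contraNF ne => /eqP Ew; apply/eqP.
by apply/eqP; rewrite -(eqn_pmul2l (ltn0Sn n)); apply/eqP; lia.
Qed.

End HomDecomposition.

Section NormalPathImages.
Variables (n g m : nat).
Hypothesis gn : g <= n.
Local Notation N := n.+1.
Local Notation h := (hh n g).
Local Notation pathb := (pathb n g m).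
Local Notation vertex := (vertexQ n g m).
Local Notation normal_path := (normal_path n g).

Lemma admissible_rows r s r' s' w : vertex (r, s) -> vertex (r', s') ->
  admissible n (Fobj n g (r, s)) (Fobj n g (r', s')) w ->
  [/\ s <= s' + h * w, s' + h * w <= r + s & r + s <= r' + s' + h * w].
Proof.
move=> /andP [/= lt_s _] /andP [/= lt_s' _] /and3P /= [C1 C2 C3].
have hp := hh_gt0 gn; have hA := hh_add gn.
split.
- case: w C1 C2 C3 => [|w] C1 C2 C3.
    by move: C1; rewrite /pS muln0 addn0; case: (s =P 0); case: (s' =P 0); lia.
  by have := leq_pmulr h (ltn0Sn w); lia.
- case: (eqVneq s' 0) => [s'0 | s'0].
    rewrite s'0 add0n leqNgt; apply/negP => lt_rs.
    case: w C1 C2 C3 lt_rs => [|w] C1 C2 C3 lt_rs; first lia.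
    have : qRS n g (r + s) <= qRS n g (h.-1 + h * w).
      by rewrite leq_qRS //; rewrite mulnS in lt_rs; lia.
    rewrite qRSD // (@qRS_small _ _ gn h.-1); last lia.
    by move: C2; rewrite s'0 /pS /= mulnS; lia.
  rewrite -(leq_qRS gn) qRSD // qRS_small //.
  by move: C2; rewrite /pS (negbTE s'0); lia.
- by rewrite -(leq_qRS gn) qRSD.
Qed.

Lemma pathb_normal_path_shift r s r' s' w : vertex (r, s) -> vertex (r', s') ->
  admissible n (Fobj n g (r, s)) (Fobj n g (r', s')) w ->
  let a := s' + h * w - s in let P := normal_path (r, s) a (r' - (r - a)) in
  pathb (r, s) (r', s') P /\ path_shift n P = N * w.
Proof.
move=> vX vY adm a P; have [R1 R2 R3] := admissible_rows vX vY adm.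
have lt_s' : s' < h by case/andP: vY.
have hp := hh_gt0 gn.
have Ea : s + a = s' + h * w by rewrite /a; lia.
have EY : (r', s') = (r - a + (r' - (r - a)), (s + a) %% h).
  by rewrite Ea [s' + _]addnC [h * w]mulnC modnMDl modn_small //; congr (_, _); lia.
have le_ar : a <= r by rewrite /a; lia.
have [pP cP] := pathb_normal_path gn vX vY le_ar EY.
by split=> //; rewrite /path_shift cP Ea [s' + _]addnC [h * w]mulnC divnMDl // divn_small // addn0.
Qed.

Lemma normal_path_top_bound a b r s Y : vertex (r, s) ->
  pathb (r, s) Y (normal_path (r, s) a b) ->
  pS n g Y.2 + path_shift n (normal_path (r, s) a b) <= qRS n g (r + s).
Proof.
move=> vX pY; have [le_ar -> cP] := normal_path_info gn vX pY.
rewrite /path_shift cP /=; apply: (@leq_trans (qRS n g (s + a))); last by rewrite leq_qRS //; lia.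
by rewrite /qRS; have := pS_le n g ((s + a) %% h); lia.
Qed.

Lemma normal_path_inj a b a' b' r s Y : vertex (r, s) ->
  pathb (r, s) Y (normal_path (r, s) a b) -> pathb (r, s) Y (normal_path (r, s) a' b') ->
  path_shift n (normal_path (r, s) a b) = path_shift n (normal_path (r, s) a' b') ->
  normal_path (r, s) a b = normal_path (r, s) a' b'.
Proof.
move=> vX pY pY'; have [le_ar EY cP] := normal_path_info gn vX pY.
have [le_ar' EY' cP'] := normal_path_info gn vX pY'.
rewrite /path_shift cP cP' => /eqP; rewrite eqn_pmul2l // => /eqP Ed.
rewrite EY in EY'; case: EY' => E1 E2.
have : s + a = s + a' by rewrite (divn_eq (s + a) h) (divn_eq (s + a') h) Ed E2.
by move=> Ea; congr normal_path; lia.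
Qed.

End NormalPathImages.

Section FullyFaithful.
Variables (n g m : nat).
Hypothesis gn : g <= n.
Local Notation N := n.+1.
Local Notation pathb := (pathb n g m).
Local Notation vertex := (vertexQ n g m).
Local Notation normal_path := (normal_path n g).

Lemma Fpath_normal_entry (k : nzRingType) r s Y a b a' b' : vertex (r, s) ->
  let P := normal_path (r, s) a b in let P' := normal_path (r, s) a' b' in
  let q := qRS n g (r + s) in
  pathb (r, s) Y P -> pathb (r, s) Y P' ->
  Fpath k n g (r, s) P' q (q - path_shift n P) = bmat k (P' == P).
Proof.
move=> vX P P' q; rewrite {}/P {}/P' {}/q => pP pP'; have [F _ _] := Fpath_shift k gn pP'.
have bP := normal_path_top_bound gn vX pP; have bP' := normal_path_top_bound gn vX pP'.
rewrite F /shiftc /=; congr bmat; apply/idP/idP => [/andP [/eqP E _] | /eqP ->].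
  by apply/eqP; apply: normal_path_inj vX pP' pP _; lia.
by apply/andP; split; [apply/eqP | apply/andP; split]; lia.
Qed.

Lemma Flin_kernel (k : nzRingType) X Y (c : seq (k * seq arrowQ)) : vertex X ->
  all (fun t => isPath n g m X Y t.2) c ->
  (forall i j, Flin n g X c i j = 0%R) -> inIdeal n g m X Y c.
Proof.
case: X => r s vX cP c0; have [c' Ec normal_c'] := eqmodI_normal_form gn cP.
have c'0 i j : Flin n g (r, s) c' i j = 0%R by rewrite -(eqmodI_Flin gn i j Ec).
apply/inIdealE; apply: (eqmodI_trans Ec); apply: eqmodI0 => p.
have [/hasP [t0 /normal_c' [a [b [-> pP]]] /eqP <-] | no_p] := boolP (has (fun t => t.2 == p) c').
  (* The entry (q, q - D) isolates the normal path with shift D. *)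
  set P := normal_path _ a b; set q := qRS n g (r + s).
  rewrite -(c'0 q (q - path_shift n P)) /Flin /coefc big_mkcond.
  apply: eq_big_seq => t /normal_c' [a' [b' [Et pt]]].
  rewrite Et in pt *; rewrite (Fpath_normal_entry _ vX pP pt).
  by rewrite /P; case: eqP => _; [rewrite bmatT // mulr1 | rewrite bmatF mulr0].
by rewrite /coefc big_hasC.
Qed.

Lemma Flin_surj (k : comNzRingType) r s r' s' (f : nat -> nat -> k) :
  vertex (r, s) -> vertex (r', s') ->
  isHom n g (Fobj n g (r, s)) (Fobj n g (r', s')) f ->
  exists c : seq (k * seq arrowQ), all (fun t => isPath n g m (r, s) (r', s') t.2) c /\
    forall i j, Flin n g (r, s) c i j = f i j.
Proof.
move=> vX vY homf.
have lt_s : s < hh n g by case/andP: vX.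
have lt_s' : s' < hh n g by case/andP: vY.
set q := qRS n g (r + s).
set P := fun w => let a := s' + hh n g * w - s in normal_path (r, s) a (r' - (r - a)).
set S := admissible_shifts n (pS n g s) q (pS n g s') (qRS n g (r' + s')).
exists [seq (f q (q - N * w), P w) | w <- S]; split.
  apply/allP => t /mapP [w]; rewrite mem_filter => /andP [adm _] ->.
  by rewrite /isPath vX (pathb_normal_path_shift gn vX vY adm).1.
move=> i j; rewrite (hom_shift_decomposition homf gn (pS_cases gn lt_s) (qRS_mod gn _)); last first.
  by have := pS_cases gn lt_s'; rewrite /=; lia.
rewrite /Flin big_map; apply: eq_big_seq => w; rewrite mem_filter => /andP [adm _].
have [pP sP] := pathb_normal_path_shift gn vX vY adm.
by have [F _ _] := Fpath_shift k gn pP; rewrite F sP.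
Qed.

Lemma Fobj_inj X Y : vertex X -> vertex Y -> Fobj n g X = Fobj n g Y -> X = Y.
Proof.
case: X Y => r s [r' s'] /andP [/= lt_s _] /andP [/= lt_s' _] [E1 E2].
have Es : s = s' by move: E1; rewrite /pS; case: (s =P 0); case: (s' =P 0); lia.
have : r + s = r' + s'.
  by apply/eqP; rewrite eqn_leq -(leq_qRS gn (r + s)) -(leq_qRS gn (r' + s')) E2 leqnn.
by subst s'; move=> E; congr (_, _); lia.
Qed.

End FullyFaithful.

Local Open Scope ring_scope.

Theorem mainTheorem3 (k : closedFieldType) (n g m : nat) :
  (1 <= n)%N -> (1 <= g <= n)%N ->
  (forall X Y, vertexQ n g m X -> vertexQ n g m Y -> Fobj n g X = Fobj n g Y -> X = Y) /\
  (forall X Y, vertexQ n g m X -> vertexQ n g m Y ->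
     (forall c : seq (k * seq arrowQ), all (fun t => isPath n g m X Y t.2) c ->
        isHom n g (Fobj n g X) (Fobj n g Y) (Flin n g X c)) /\
     (forall f : nat -> nat -> k, isHom n g (Fobj n g X) (Fobj n g Y) f ->
        exists c : seq (k * seq arrowQ), all (fun t => isPath n g m X Y t.2) c /\
          forall i j, Flin n g X c i j = f i j) /\
     (forall c : seq (k * seq arrowQ), all (fun t => isPath n g m X Y t.2) c ->
        ((forall i j, Flin n g X c i j = 0) <-> inIdeal n g m X Y c))).
Proof.
move=> _ /andP [_ gn]; split=> [X Y | X Y vX vY]; first exact: Fobj_inj.
split; first by move=> c; apply: Flin_hom.
split; first by case: X Y vX vY => r s [r' s'] vX vY f; apply: Flin_surj.
move=> c cP; split; first exact: Flin_kernel.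
by move=> /inIdealE Ec i j; rewrite (eqmodI_Flin gn i j Ec) /Flin big_nil.
Qed.
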